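(* Let $R\subseteq\mathbb N$ be a congruence-periodic sparse predicate, $d\in\mathbb N^+$, $\tilde R\subseteq^dR$, $n\in\mathbb N^+$, $\mathbf A$ an $n$-tuple of operators all $\neq_R0$, and $\Delta\in d\mathbb N$ sufficiently large. Then there is $\Lambda\in\mathbb N$ such that the following holds: for all $s,t,x\in\mathbb Z$ with $s\le t<x-\min\mathbf A\cdot\tilde R^n_\Delta$ if $A_1>_R0$ (respectively $s\ge t>x-\max\mathbf A\cdot\tilde R^n_\Delta$ if $A_1<_R0$), either (i) $P^1_\Delta(x-s;\mathbf A,\tilde R)=\sigma^\delta P^1_\Delta(x-t;\mathbf A,\tilde R)$ for some $0\le\delta\le\Lambda$, or (ii) $P^1_\Delta(x-s;\mathbf A,\tilde R)=\sigma^\varepsilon P^1_\Delta(t-s;\mathbf A,\tilde R)$ for some $0\le\varepsilon\le\Lambda$.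
   Context: Let $R\subseteq\mathbb N$ be infinite, enumerated increasingly as $(r_n)$; $\sigma:R\to R$ is the successor map, $\sigma^k$ its iterate ($\sigma^0=\mathrm{id}$). An operator on $R$ is $z\mapsto\sum_{i=0}^ma_i\sigma^i(z)$, $a_i\in\mathbb Z$. $A=_R0$: $Az=0$ for all $z\in R$; $A>_R0$ (resp. $<_R0$): $Az>0$ (resp. $<0$) for cofinitely many $z$. $R$ sparse: every operator satisfies (S1) $A=_R0$ or $A>_R0$ or $A<_R0$; (S2) if $A>_R0$ there is $\Delta$ with $A(\sigma^\Delta z)>z$ for all $z$. Congruence-periodic: $(r_n\bmod m)$ eventually periodic for each $m\ge1$. $\tilde R\subseteq^dR$: $\tilde R=\{r_{N+dt}:t\in\mathbb N\}$ for some $N$. $\mathbf A\cdot z=\sum A_iz_i$, $\mathbf A\cdot S=\{\mathbf A\cdot z:z\in S\}$. $\tilde R^n_\Delta=\{z\in\tilde R^n:z_i\ge\sigma^\Delta z_{i+1}\ (1\le i\le n)\}$, $z_{n+1}:=\min\tilde R$. For $\mathbf A$ with entries $\neq_R0$ and $\Delta$ large enough that $z\mapsto\mathbf A\cdot z$ is injective on $R^n_\Delta$, $P_\Delta(x;\mathbf A,\tilde R)$ is the $z\in\tilde R^n_\Delta$ with largest $\mathbf A\cdot z$ subject to $\mathbf A\cdot z<x$ if $x>\inf\mathbf A\cdot\tilde R^n_\Delta$, and otherwise the $z\in\tilde R^n_\Delta$ minimising $\mathbf A\cdot z$; $P^1_\Delta$ is its first coordinate. ''$\Delta\in d\mathbb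 N$ sufficiently large'' means $\Delta\ge\Delta_0$ for some suitable $\Delta_0$. *)

From Stdlib Require Import Arith ZArith List Lia ClassicalEpsilon.
Import ListNotations.
Open Scope Z_scope.

Definition cntR (R : nat -> bool) (k : nat) : nat :=
  length (filter R (seq 0 k)).

Definition Rinfinite (R : nat -> bool) : Prop :=
  forall m : nat, exists k : nat, (m <= k)%nat /\ R k = true.

(* r_n : the n-th element (0-indexed) of R in increasing order *)
Definition enumR (R : nat -> bool) (n : nat) : nat :=
  epsilon (inhabits 0%nat) (fun k => R k = true /\ cntR R k = n).

(* successor map σ : the least element of R strictly greater than z *)
Definition succR (R : nat -> bool) (z : nat) : nat :=
  enumR R (cntR R (S z)).

Definition succRk (R : nat -> bool) (k : nat) (z : nat) : nat :=
  Nat.iter k (succR R) z.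

(* An operator is the list of its integer coefficients [a_0; ...; a_m];
   it acts by z ↦ Σ a_i σ^i(z). *)
Definition operator := list Z.

Fixpoint opApp_from (R : nat -> bool) (A : operator) (i : nat) (z : nat) : Z :=
  match A with
  | [] => 0
  | a :: A' => a * Z.of_nat (succRk R i z) + opApp_from R A' (S i) z
  end.

Definition opApp (R : nat -> bool) (A : operator) (z : nat) : Z :=
  opApp_from R A 0 z.

Definition opEq0 (R : nat -> bool) (A : operator) : Prop :=
  forall z, R z = true -> opApp R A z = 0.

Definition opPos (R : nat -> bool) (A : operator) : Prop :=
  exists N : nat, forall z, R z = true -> (N <= z)%nat -> opApp R A z > 0.

Definition opNeg (R : nat -> bool) (A : operator) : Prop :=
  exists N : nat, forall z, R z = true -> (N <= z)%nat -> opApp R A z < 0.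

Definition sparse (R : nat -> bool) : Prop :=
  Rinfinite R /\
  forall A : operator,
    (opEq0 R A \/ opPos R A \/ opNeg R A) /\
    (opPos R A -> exists Delta : nat, forall z, R z = true ->
        opApp R A (succRk R Delta z) > Z.of_nat z).

Definition congruence_periodic (R : nat -> bool) : Prop :=
  forall m : nat, (1 <= m)%nat ->
    exists p N0 : nat, (1 <= p)%nat /\
      forall k : nat, (N0 <= k)%nat ->
        Nat.modulo (enumR R (k + p)) m = Nat.modulo (enumR R k) m.

(* R~ = { r_{N + d t} : t ∈ ℕ }  (R~ ⊆^d R, determined by N and d) *)
Definition Rsub (R : nat -> bool) (N d : nat) (k : nat) : Prop :=
  exists t : nat, k = enumR R (N + d * t).

(* z_i, 0-indexed (z_1 of the paper is index 0), with z_{n+1} := min R~ = r_N *)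
Definition zext (R : nat -> bool) (N : nat) (n : nat) (z : list nat) (i : nat) : nat :=
  if (i <? n)%nat then nth i z 0%nat else enumR R N.

Definition inRtildeDelta (R : nat -> bool) (N d n Delta : nat) (z : list nat) : Prop :=
  length z = n /\
  (forall i, (i < n)%nat -> Rsub R N d (nth i z 0%nat)) /\
  (forall i, (i < n)%nat ->
     (succRk R Delta (zext R N n z (S i)) <= nth i z 0%nat)%nat).

Fixpoint dotA (R : nat -> bool) (A : list operator) (z : list nat) : Z :=
  match A, z with
  | a :: A', zi :: z' => opApp R a zi + dotA R A' z'
  | _, _ => 0
  end.

(* The specification of P_Δ(x; A, R~):
   if x > inf A·R~^n_Δ (i.e. some value of A·R~^n_Δ is < x), the z with the
   largest A·z subject to A·z < x; otherwise the z minimising A·z. *)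
Definition isP (R : nat -> bool) (N d n Delta : nat) (A : list operator) (x : Z)
    (z : list nat) : Prop :=
  inRtildeDelta R N d n Delta z /\
  ( ( (exists w, inRtildeDelta R N d n Delta w /\ dotA R A w < x) /\
      dotA R A z < x /\
      forall w, inRtildeDelta R N d n Delta w -> dotA R A w < x ->
        dotA R A w <= dotA R A z )
  \/
    ( ~ (exists w, inRtildeDelta R N d n Delta w /\ dotA R A w < x) /\
      forall w, inRtildeDelta R N d n Delta w -> dotA R A z <= dotA R A w ) ).

Definition PDelta (R : nat -> bool) (N d n Delta : nat) (A : list operator) (x : Z)
  : list nat :=
  epsilon (inhabits []) (isP R N d n Delta A x).

Definition P1Delta (R : nat -> bool) (N d n Delta : nat) (A : list operator) (x : Z)
  : nat :=
  nth 0 (PDelta R N d n Delta A x) 0%nat.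

Definition isMinDot (R : nat -> bool) (N d n Delta : nat) (A : list operator) (m : Z) : Prop :=
  (exists z, inRtildeDelta R N d n Delta z /\ dotA R A z = m) /\
  forall z, inRtildeDelta R N d n Delta z -> m <= dotA R A z.

Definition isMaxDot (R : nat -> bool) (N d n Delta : nat) (A : list operator) (M : Z) : Prop :=
  (exists z, inRtildeDelta R N d n Delta z /\ dotA R A z = M) /\
  forall z, inRtildeDelta R N d n Delta z -> dotA R A z <= M.

From Stdlib Require Import Arith ZArith List Lia Classical ClassicalEpsilon.
Import ListNotations.
Open Scope Z_scope.

(* For Δ large, the value [A·z] on [R~^n_Δ] is governed by the leading coordinate z_1
   (after replacing A by -A when A_1 <_R 0): it is positive, strictly increasing in z_1,
   and at least doubles whenever z_1 advances a fixed number L of steps along R.  Indeed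
   the tail contributes O(σ^k z_2), which (S2) makes negligible against A_1 z_1 once
   z_1 >= σ^Δ z_2.  Let a, b, c be the points P(x-s), P(x-t), P(t-s).  Raising the
   larger of b_1, c_1 by σ^d gives a point whose value reaches both x-t and t-s, so no
   point L steps beyond it can lie below their sum x-s; hence a_1 is within L+d steps of
   b_1 or of c_1.  When A_1 <_R 0 the same argument runs with least values above the
   targets instead of greatest values below. *)

Section Successor.

Variable R : nat -> bool.
Hypothesis Rinf : Rinfinite R.

Lemma cntR_S k : cntR R (S k) = (cntR R k + if R k then 1 else 0)%nat.
Proof.
  unfold cntR. rewrite seq_S, filter_app, length_app. simpl.
  destruct (R k); simpl; lia.
Qed.

Lemma cntR_mono a b : (a <= b)%nat -> (cntR R a <= cntR R b)%nat.
Proof. induction 1; auto. rewrite cntR_S. lia. Qed.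

Lemma cntR_lt a b : R a = true -> (a < b)%nat -> (cntR R a < cntR R b)%nat.
Proof.
  intros Ra Hab. pose proof (cntR_mono (S a) b Hab) as H. rewrite cntR_S, Ra in H. lia.
Qed.

Lemma cntR_attained_above z : exists k, R k = true /\ (z <= k)%nat /\ cntR R k = cntR R z.
Proof.
  destruct (Rinf z) as [k [Hzk Rk]].
  remember (k - z)%nat as m eqn:Hm. revert z Hzk Hm.
  induction m as [m IH] using lt_wf_ind. intros z Hzk Hm.
  destruct (R z) eqn:Rz.
  - now exists z.
  - assert (z <> k) by (intros ->; congruence).
    destruct (IH (k - S z)%nat ltac:(lia) (S z) ltac:(lia) eq_refl) as [k' [Rk' [Hk' Ck']]].
    exists k'. split; [exact Rk'|split; [lia|]]. rewrite Ck', cntR_S, Rz. lia.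
Qed.

Lemma cntR_surj j : exists k, R k = true /\ cntR R k = j.
Proof.
  induction j as [|j [k [Rk Ck]]].
  - destruct (cntR_attained_above 0) as [k [Rk [_ Ck]]]. now exists k.
  - destruct (cntR_attained_above (S k)) as [k' [Rk' [_ Ck']]].
    exists k'. split; auto. rewrite Ck', cntR_S, Rk. lia.
Qed.

Lemma enumR_spec j : R (enumR R j) = true /\ cntR R (enumR R j) = j.
Proof. unfold enumR. apply epsilon_spec, cntR_surj. Qed.

Lemma succR_spec z :
  R (succR R z) = true /\ (z < succR R z)%nat /\
  forall v, R v = true -> (z < v)%nat -> (succR R z <= v)%nat.
Proof.
  unfold succR. destruct (enumR_spec (cntR R (S z))) as [Rk Ck].
  set (k := enumR R (cntR R (S z))) in *.
  assert (Hzk : (z < k)%nat).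
  { destruct (le_lt_dec k z) as [Hkz|]; auto. pose proof (cntR_lt k (S z) Rk ltac:(lia)). lia. }
  split; [exact Rk|split; [exact Hzk|]]. intros v Rv Hzv.
  destruct (le_lt_dec k v) as [|Hvk]; auto.
  pose proof (cntR_lt v k Rv Hvk). pose proof (cntR_mono (S z) v Hzv). lia.
Qed.

Lemma succR_enumR j : succR R (enumR R j) = enumR R (S j).
Proof.
  unfold succR. destruct (enumR_spec j) as [Rj Cj].
  rewrite cntR_S, Rj, Cj. f_equal. lia.
Qed.

Lemma succR_mono a b : (a <= b)%nat -> (succR R a <= succR R b)%nat.
Proof.
  intros Hab. destruct (succR_spec a) as [_ [_ Hleast]].
  destruct (succR_spec b) as [Rb [Hb _]]. apply Hleast; auto. lia.
Qed.

Lemma succR_le_reflect a b : R a = true -> (succR R a <= succR R b)%nat -> (a <= b)%nat.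
Proof.
  intros Ra H. destruct (le_lt_dec a b) as [|Hba]; auto.
  destruct (succR_spec b) as [_ [_ Hleast]]. specialize (Hleast a Ra Hba).
  destruct (succR_spec a) as [_ [Ha _]]. lia.
Qed.

Lemma succRk_S_r k z : succRk R (S k) z = succRk R k (succR R z).
Proof. apply Nat.iter_succ_r. Qed.

Lemma succRk_add a b z : succRk R (a + b) z = succRk R a (succRk R b z).
Proof. apply Nat.iter_add. Qed.

Lemma succRk_R k z : R z = true -> R (succRk R k z) = true.
Proof. intros Rz. destruct k; [exact Rz|]. apply succR_spec. Qed.

Lemma succRk_ge k z : (z + k <= succRk R k z)%nat.
Proof.
  induction k as [|k IH]; [simpl; lia|].
  change (succRk R (S k) z) with (succR R (succRk R k z)).
  destruct (succR_spec (succRk R k z)) as [_ [H _]]. lia.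
Qed.

Lemma succRk_mono k a b : (a <= b)%nat -> (succRk R k a <= succRk R k b)%nat.
Proof. intros Hab. induction k; simpl; auto. now apply succR_mono. Qed.

Lemma succRk_mono_k i j z : (i <= j)%nat -> (succRk R i z <= succRk R j z)%nat.
Proof.
  intros Hij. replace j with ((j - i) + i)%nat by lia. rewrite succRk_add.
  pose proof (succRk_ge (j - i) (succRk R i z)). lia.
Qed.

Lemma succRk_lt_k i j z : (i < j)%nat -> (succRk R i z < succRk R j z)%nat.
Proof.
  intros Hij. replace j with ((j - i) + i)%nat by lia. rewrite succRk_add.
  pose proof (succRk_ge (j - i) (succRk R i z)). lia.
Qed.

Lemma succRk_le_reflect_k i j z : (succRk R i z <= succRk R j z)%nat -> (i <= j)%nat.
Proof.
  intros H. destruct (le_lt_dec i j) as [|Hji]; auto.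
  pose proof (succRk_lt_k j i z Hji). lia.
Qed.

Lemma succRk_reach a b : R a = true -> R b = true -> (a <= b)%nat ->
  exists i, b = succRk R i a.
Proof.
  intros Ra Rb. remember (b - a)%nat as m eqn:Hm. revert a Ra Hm.
  induction m as [m IH] using lt_wf_ind. intros a Ra Hm Hab.
  destruct (Nat.eq_dec a b) as [<-|Hne]; [now exists 0%nat|].
  destruct (succR_spec a) as [Rs [Has Hleast]]. specialize (Hleast b Rb ltac:(lia)).
  destruct (IH (b - succR R a)%nat ltac:(lia) (succR R a) Rs eq_refl Hleast) as [i Hi].
  exists (S i). now rewrite succRk_S_r.
Qed.

Lemma succRk_reach_within a b L : R a = true -> R b = true -> (a <= b)%nat ->
  (b <= succRk R L a)%nat -> exists i, (i <= L)%nat /\ b = succRk R i a.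
Proof.
  intros Ra Rb Hab HbL. destruct (succRk_reach a b Ra Rb Hab) as [i ->].
  exists i. split; auto. exact (succRk_le_reflect_k _ _ _ HbL).
Qed.

Lemma succR_pred a b : R a = true -> R b = true -> (a < b)%nat ->
  exists w, R w = true /\ (a <= w)%nat /\ b = succR R w.
Proof.
  intros Ra Rb Hab. destruct (succRk_reach a b Ra Rb ltac:(lia)) as [[|i] ->]; [simpl in Hab; lia|].
  exists (succRk R i a). split; [now apply succRk_R|split; [apply (succRk_mono_k 0)|]]; auto; lia.
Qed.

Lemma succRk_enumR k j : succRk R k (enumR R j) = enumR R (k + j).
Proof.
  induction k as [|k IH]; [reflexivity|].
  change (succRk R (S k) (enumR R j)) with (succR R (succRk R k (enumR R j))).
  now rewrite IH, succR_enumR.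
Qed.

Lemma Rsub_R N d x : Rsub R N d x -> R x = true.
Proof. intros [t ->]. apply enumR_spec. Qed.

Lemma Rsub_succRk_mul N d x c : Rsub R N d x -> Rsub R N d (succRk R (d * c) x).
Proof.
  intros [t ->]. exists (t + c)%nat. rewrite succRk_enumR. f_equal. lia.
Qed.

End Successor.

Section Operators.

Variable R : nat -> bool.

Fixpoint op_sub (F G : operator) : operator :=
  match F, G with
  | [], G => map Z.opp G
  | F, [] => F
  | a :: F', b :: G' => (a - b) :: op_sub F' G'
  end.

Definition op_diff (F : operator) : operator := op_sub (0 :: F) F.

Lemma opApp_from_shift F j u : opApp_from R F (S j) u = opApp_from R F j (succR R u).
Proof.
  revert j. induction F as [|a F IH]; intros j; cbn [opApp_from]; auto.
  now rewrite IH, succRk_S_r.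
Qed.

Lemma opApp_from_opp F j u : opApp_from R (map Z.opp F) j u = - opApp_from R F j u.
Proof. revert j. induction F as [|a F IH]; intros j; simpl; auto. rewrite IH. lia. Qed.

Lemma opApp_opp F u : opApp R (map Z.opp F) u = - opApp R F u.
Proof. apply opApp_from_opp. Qed.

Lemma opApp_from_sub F G j u :
  opApp_from R (op_sub F G) j u = opApp_from R F j u - opApp_from R G j u.
Proof.
  revert G j. induction F as [|a F IH]; intros G j.
  - simpl. rewrite opApp_from_opp. lia.
  - destruct G; simpl; [lia|]. rewrite IH. lia.
Qed.

Lemma opApp_diff F u : opApp R (op_diff F) u = opApp R F (succR R u) - opApp R F u.
Proof.
  unfold op_diff, opApp. rewrite opApp_from_sub. simpl. rewrite opApp_from_shift. lia.
Qed.

Lemma dotA_opp A z : dotA R (map (map Z.opp) A) z = - dotA R A z.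
Proof.
  revert z. induction A as [|F A IH]; intros [|y z]; simpl; try lia.
  rewrite IH, opApp_opp. lia.
Qed.

Lemma opPos_opNeg_exclusive F : Rinfinite R -> opPos R F -> opNeg R F -> False.
Proof.
  intros Rinf [N1 H1] [N2 H2]. destruct (Rinf (N1 + N2)%nat) as [z [Hz Rz]].
  specialize (H1 z Rz ltac:(lia)). specialize (H2 z Rz ltac:(lia)). lia.
Qed.

Lemma opNeg_opp F : opNeg R F -> opPos R (map Z.opp F).
Proof.
  intros [N0 HN]. exists N0. intros z Rz Hz. rewrite opApp_opp. specialize (HN z Rz Hz). lia.
Qed.

Hypothesis Rinf : Rinfinite R.

Lemma opApp_from_bound F : exists W, 0 <= W /\ forall j y v, (y <= v)%nat ->
  Z.abs (opApp_from R F j y) <= W * Z.of_nat (succRk R (j + length F) v).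
Proof.
  induction F as [|a F [W [HW IH]]].
  - exists 0. split; [lia|]. intros. simpl. lia.
  - exists (Z.abs a + W). split; [lia|]. intros j y v Hyv. cbn [opApp_from length].
    specialize (IH (S j) y v Hyv). rewrite Nat.add_succ_comm in IH.
    assert (Hmono : (succRk R j y <= succRk R (j + S (length F)) v)%nat).
    { pose proof (succRk_mono R Rinf j y v Hyv).
      pose proof (succRk_mono_k R Rinf j (j + S (length F)) v). lia. }
    assert (Z.abs (a * Z.of_nat (succRk R j y))
            <= Z.abs a * Z.of_nat (succRk R (j + S (length F)) v)).
    { rewrite Z.abs_mul, (Z.abs_eq (Z.of_nat _)) by lia. apply Z.mul_le_mono_nonneg_l; lia. }
    lia.
Qed.

Lemma opApp_bound F : exists W k, 0 <= W /\ forall y v, (y <= v)%nat ->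
  Z.abs (opApp R F y) <= W * Z.of_nat (succRk R k v).
Proof.
  destruct (opApp_from_bound F) as [W [HW H]]. exists W, (length F). split; auto.
  intros y v Hyv. exact (H 0%nat y v Hyv).
Qed.

Lemma dotA_bound A : exists W k, 0 <= W /\ forall zs v, (forall y, In y zs -> (y <= v)%nat) ->
  Z.abs (dotA R A zs) <= W * Z.of_nat (succRk R k v).
Proof.
  induction A as [|G A [W2 [k2 [HW2 IH]]]].
  - exists 0, 0%nat. split; [lia|]. intros [|y zs] v _; simpl; lia.
  - destruct (opApp_bound G) as [W1 [k1 [HW1 HG]]].
    exists (W1 + W2), (Nat.max k1 k2). split; [lia|]. intros [|y zs] v Hzs; simpl.
    { pose proof (Zle_0_nat (succRk R (Nat.max k1 k2) v)). nia. }
    specialize (HG y v (Hzs y (or_introl eq_refl))).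
    specialize (IH zs v (fun y' H => Hzs y' (or_intror H))).
    pose proof (succRk_mono_k R Rinf k1 (Nat.max k1 k2) v ltac:(lia)).
    pose proof (succRk_mono_k R Rinf k2 (Nat.max k1 k2) v ltac:(lia)).
    nia.
Qed.

End Operators.

Section Sparse.

Variable R : nat -> bool.
Hypothesis Hs : sparse R.
Let Rinf : Rinfinite R := proj1 Hs.

Lemma opApp_gap z : opApp R [-1; 1] z = Z.of_nat (succR R z) - Z.of_nat z.
Proof.
  unfold opApp. cbn [opApp_from].
  change (succRk R 0 z) with z. change (succRk R 1 z) with (succR R z). lia.
Qed.

Lemma sparse_geometric : exists g, forall t u, R u = true ->
  (2 ^ t * u <= succRk R (g * t) u)%nat.
Proof.
  (* (S2) for [z ↦ σ z - z] gives [σ^(D+1) u - σ^D u > u]. *)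
  destruct (proj2 Hs [-1; 1]) as [_ S2].
  destruct S2 as [D HD].
  { exists 0%nat. intros z Rz _. rewrite opApp_gap.
    destruct (succR_spec R Rinf z) as [_ [H _]]. lia. }
  exists (S D). induction t as [|t IH]; intros u Ru; [rewrite Nat.mul_0_r; simpl; lia|].
  replace (S D * S t)%nat with (S D + S D * t)%nat by lia. rewrite succRk_add.
  set (y := succRk R (S D * t) u). specialize (IH u Ru). fold y in IH.
  specialize (HD y (succRk_R R Rinf _ _ Ru)).
  rewrite opApp_gap in HD.
  change (succRk R (S D) y) with (succR R (succRk R D y)).
  pose proof (succRk_ge R Rinf D y). rewrite Nat.pow_succ_r'. lia.
Qed.

Section PositiveOperator.

Variable F : operator.
Hypothesis Fpos : opPos R F.

Lemma opPos_op_diff : opPos R (op_diff F).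
Proof.
  destruct (proj2 Hs F) as [_ S2]. destruct (S2 Fpos) as [D HD].
  assert (orbit_unbounded : forall z0, R z0 = true ->
            ~ forall i, opApp R F (succRk R i z0) <= opApp R F z0).
  { intros z0 Rz0 Hbd. set (M := Z.to_nat (opApp R F z0)).
    specialize (HD (succRk R M z0) (succRk_R R Rinf M z0 Rz0)).
    rewrite <- succRk_add in HD. specialize (Hbd (D + M)%nat).
    pose proof (succRk_ge R Rinf M z0). lia. }
  destruct (proj2 Hs (op_diff F)) as [[Heq | [Hp | [N' HN]]] _]; [exfalso| exact Hp| exfalso].
  - destruct (Rinf 0%nat) as [z0 [_ Rz0]]. apply (orbit_unbounded z0 Rz0).
    induction i as [|i IH]; [simpl; lia|].
    specialize (Heq _ (succRk_R R Rinf i z0 Rz0)). rewrite opApp_diff in Heq.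
    change (succRk R (S i) z0) with (succR R (succRk R i z0)). lia.
  - destruct (Rinf N') as [z0 [Hz0 Rz0]]. apply (orbit_unbounded z0 Rz0).
    induction i as [|i IH]; [simpl; lia|].
    pose proof (succRk_ge R Rinf i z0).
    specialize (HN _ (succRk_R R Rinf i z0 Rz0) ltac:(lia)). rewrite opApp_diff in HN.
    change (succRk R (S i) z0) with (succR R (succRk R i z0)). lia.
Qed.

Lemma opPos_monotone : exists N0, forall u w, R u = true -> R w = true ->
  (N0 <= u)%nat -> (u <= w)%nat -> opApp R F u <= opApp R F w.
Proof.
  destruct opPos_op_diff as [N0 HN]. exists N0. intros u w Ru Rw Hu Huw.
  destruct (succRk_reach R Rinf u w Ru Rw Huw) as [i ->]. clear Rw Huw.
  induction i as [|i IH]; [simpl; lia|].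
  pose proof (succRk_ge R Rinf i u).
  specialize (HN _ (succRk_R R Rinf i u Ru) ltac:(lia)). rewrite opApp_diff in HN.
  change (succRk R (S i) u) with (succR R (succRk R i u)) in *. lia.
Qed.

Lemma opPos_dominates c k : exists J, forall x w, R x = true -> R w = true ->
  (succRk R J x <= w)%nat -> c * Z.of_nat (succRk R k x) < opApp R F w.
Proof.
  destruct opPos_monotone as [N0 Hmono].
  destruct (proj2 Hs F) as [_ S2]. destruct (S2 Fpos) as [D HD].
  destruct sparse_geometric as [g Hg].
  set (t := Z.to_nat c).
  (* [y] is [N0] steps above [σ^(g t) (σ^k x) >= 2^t σ^k x >= c σ^k x], and [F(σ^D y) > y]. *)
  exists (D + (N0 + (g * t + k)))%nat. intros x w Rx Rw Hw.
  rewrite succRk_add in Hw. set (y := succRk R (N0 + (g * t + k)) x) in *.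
  assert (Ry : R y = true) by (apply succRk_R; auto).
  assert (Hy : (2 ^ t * succRk R k x <= y)%nat).
  { unfold y. rewrite !succRk_add.
    pose proof (succRk_ge R Rinf N0 (succRk R (g * t) (succRk R k x))).
    pose proof (Hg t (succRk R k x) (succRk_R R Rinf k x Rx)). lia. }
  assert (Hc : c <= Z.of_nat (2 ^ t)).
  { pose proof (Nat.pow_gt_lin_r 2 t ltac:(lia)). unfold t in *. lia. }
  pose proof (succRk_ge R Rinf D y). pose proof (succRk_ge R Rinf (N0 + (g * t + k)) x).
  pose proof (Hmono (succRk R D y) w (succRk_R R Rinf D y Ry) Rw ltac:(unfold y in *; lia) Hw).
  specialize (HD y Ry).
  assert (c * Z.of_nat (succRk R k x) <= Z.of_nat (2 ^ t) * Z.of_nat (succRk R k x))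
    by (apply Z.mul_le_mono_nonneg_r; lia).
  lia.
Qed.

End PositiveOperator.
End Sparse.

Section Perturbation.

Variable R : nat -> bool.
Hypothesis Hs : sparse R.
Let Rinf : Rinfinite R := proj1 Hs.

Variable F : operator.
Hypothesis Fpos : opPos R F.
Variables (W : Z) (k : nat).
Hypothesis HW : 0 <= W.

Lemma perturbed_pos : exists J, forall z1 v T, R z1 = true -> R v = true ->
  (succRk R J v <= z1)%nat -> Z.abs T <= W * Z.of_nat (succRk R k v) ->
  0 < opApp R F z1 + T.
Proof.
  destruct (opPos_dominates R Hs F Fpos W k) as [J HJ]. exists J.
  intros z1 v T Rz1 Rv Hv HT. specialize (HJ v z1 Rv Rz1 Hv). lia.
Qed.

Lemma perturbed_increasing : exists J, forall z1 v T z1' v' T',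
  R z1 = true -> R v = true -> (succRk R J v <= z1)%nat ->
  Z.abs T <= W * Z.of_nat (succRk R k v) ->
  R z1' = true -> R v' = true -> (succRk R J v' <= z1')%nat ->
  Z.abs T' <= W * Z.of_nat (succRk R k v') ->
  (z1 < z1')%nat -> opApp R F z1 + T < opApp R F z1' + T'.
Proof.
  destruct (opPos_monotone R Hs F Fpos) as [N0 Hmono].
  destruct (opPos_dominates R Hs _ (opPos_op_diff R Hs F Fpos) (2 * W) k) as [J HJ].
  (* The last step [w -> σ w = z1'] alone raises [F] by more than [|T| + |T'|]. *)
  exists (S (J + N0)). intros z1 v T z1' v' T' Rz1 Rv Hv HT Rz1' Rv' Hv' HT' Hlt.
  destruct (succR_pred R Rinf z1 z1' Rz1 Rz1' Hlt) as [w [Rw [Hz1w ->]]].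
  assert (HvJ : (succRk R J v <= w)%nat).
  { pose proof (succRk_mono_k R Rinf J (S (J + N0)) v ltac:(lia)). lia. }
  assert (Hv'J : (succRk R J v' <= w)%nat).
  { apply (succR_le_reflect R Rinf); [now apply succRk_R|].
    pose proof (succRk_mono_k R Rinf (S J) (S (J + N0)) v' ltac:(lia)).
    change (succR R (succRk R J v')) with (succRk R (S J) v'). lia. }
  pose proof (HJ v w Rv Rw HvJ) as Ev. pose proof (HJ v' w Rv' Rw Hv'J) as Ev'.
  rewrite opApp_diff in Ev, Ev'.
  pose proof (succRk_ge R Rinf (S (J + N0)) v).
  pose proof (Hmono z1 w Rz1 Rw ltac:(lia) Hz1w). lia.
Qed.

Lemma perturbed_doubling : exists J L, forall z1 v T z1' v' T',
  R z1 = true -> (v <= z1)%nat -> Z.abs T <= W * Z.of_nat (succRk R k v) ->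
  R z1' = true -> R v' = true -> (succRk R J v' <= z1')%nat ->
  Z.abs T' <= W * Z.of_nat (succRk R k v') ->
  (succRk R L z1 <= z1')%nat -> 2 * (opApp R F z1 + T) <= opApp R F z1' + T'.
Proof.
  destruct (opApp_bound R Rinf F) as [WF [kF [HWF HF]]].
  (* [F z1' > 4 (|F z1| + |T|)] and [F z1' > 2 |T'|]. *)
  destruct (opPos_dominates R Hs F Fpos (4 * (WF + W)) (kF + k)) as [L HL].
  destruct (opPos_dominates R Hs F Fpos (2 * W) k) as [J HJ].
  exists J, L. intros z1 v T z1' v' T' Rz1 Hvz1 HT Rz1' Rv' Hv' HT' HL1.
  specialize (HL z1 z1' Rz1 Rz1' HL1). specialize (HJ v' z1' Rv' Rz1' Hv').
  specialize (HF z1 z1 (le_n _)).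
  set (X := Z.of_nat (succRk R (kF + k) z1)) in *.
  assert (Z.of_nat (succRk R kF z1) <= X)
    by (pose proof (succRk_mono_k R Rinf kF (kF + k) z1 ltac:(lia)); unfold X; lia).
  assert (Z.of_nat (succRk R k v) <= X).
  { pose proof (succRk_mono R Rinf k v z1 Hvz1).
    pose proof (succRk_mono_k R Rinf k (kF + k) z1 ltac:(lia)). unfold X; lia. }
  assert (WF * Z.of_nat (succRk R kF z1) <= WF * X) by (apply Z.mul_le_mono_nonneg_l; lia).
  assert (W * Z.of_nat (succRk R k v) <= W * X) by (apply Z.mul_le_mono_nonneg_l; lia).
  lia.
Qed.

End Perturbation.

Section Domain.

Variables (R : nat -> bool) (N d n Delta : nat).
Hypothesis Rinf : Rinfinite R.
Hypothesis n_pos : (1 <= n)%nat.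

Local Notation dom := (inRtildeDelta R N d n Delta).

Lemma inRtildeDelta_tail_le z : dom z ->
  forall i, (S i < n)%nat -> (nth (S i) z 0%nat <= nth 1 z 0%nat)%nat.
Proof.
  intros [_ [_ Hch]] i. induction i as [|i IH]; intros Hi; [lia|].
  specialize (IH ltac:(lia)). specialize (Hch (S i) ltac:(lia)).
  unfold zext in Hch.
  replace (S (S i) <? n)%nat with true in Hch by (symmetry; apply Nat.ltb_lt; lia).
  pose proof (succRk_ge R Rinf Delta (nth (S (S i)) z 0%nat)). lia.
Qed.

Lemma inRtildeDelta_decomp z : dom z -> exists z1 zs v, z = z1 :: zs /\
  Rsub R N d z1 /\ R v = true /\ (succRk R Delta v <= z1)%nat /\
  forall y, In y zs -> (y <= v)%nat.
Proof.
  intros Hz. pose proof Hz as [Hlen [Hsub Hch]].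
  destruct z as [|z1 zs]; [simpl in Hlen; lia|].
  exists z1, zs, (zext R N n (z1 :: zs) 1). split; [reflexivity|].
  split; [exact (Hsub 0%nat n_pos)|]. split; [|split; [exact (Hch 0%nat n_pos)|]].
  - unfold zext. destruct (1 <? n)%nat eqn:E.
    + apply Nat.ltb_lt in E. exact (Rsub_R R Rinf N d _ (Hsub 1%nat E)).
    + apply enumR_spec, Rinf.
  - intros y Hy. apply In_nth with (d := 0%nat) in Hy as [i [Hi <-]]. simpl in Hlen.
    unfold zext. replace (1 <? n)%nat with true by (symmetry; apply Nat.ltb_lt; lia).
    exact (inRtildeDelta_tail_le _ Hz i ltac:(lia)).
Qed.

Lemma inRtildeDelta_head_R z : dom z -> R (nth 0 z 0%nat) = true.
Proof.
  intros Hz. destruct (inRtildeDelta_decomp z Hz) as [z1 [zs [v [-> [Hz1 _]]]]].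
  exact (Rsub_R R Rinf N d z1 Hz1).
Qed.

Lemma inRtildeDelta_raise_head z c : dom z -> exists z', dom z' /\
  nth 0 z' 0%nat = succRk R (d * c) (nth 0 z 0%nat).
Proof.
  intros Hz. destruct (inRtildeDelta_decomp z Hz) as [z1 [zs [v [-> [Hz1 _]]]]].
  exists (succRk R (d * c) z1 :: zs). split; [|reflexivity].
  destruct Hz as [Hlen [Hsub Hch]]. split; [exact Hlen|split].
  - intros [|i] Hi; [now apply Rsub_succRk_mul|exact (Hsub (S i) Hi)].
  - intros i Hi. specialize (Hch i Hi).
    change (zext R N n (succRk R (d * c) z1 :: zs) (S i)) with (zext R N n (z1 :: zs) (S i)).
    destruct i; simpl in *; [pose proof (succRk_ge R Rinf (d * c) z1)|]; lia.
Qed.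

End Domain.

Definition lead_geometric (R : nat -> bool) (N d n Delta L : nat) (f : list nat -> Z) : Prop :=
  (forall z, inRtildeDelta R N d n Delta z -> 0 < f z) /\
  (forall z z', inRtildeDelta R N d n Delta z -> inRtildeDelta R N d n Delta z' ->
     (nth 0 z 0 < nth 0 z' 0)%nat -> f z < f z') /\
  (forall z z', inRtildeDelta R N d n Delta z -> inRtildeDelta R N d n Delta z' ->
     (succRk R L (nth 0 z 0) <= nth 0 z' 0)%nat -> 2 * f z <= f z').

Lemma dotA_lead_geometric R N d n F Bs : sparse R -> opPos R F -> length (F :: Bs) = n ->
  exists Delta0 L, forall Delta, (Delta0 <= Delta)%nat ->
    lead_geometric R N d n Delta L (dotA R (F :: Bs)).
Proof.
  intros Hs Fpos Hlen. pose proof (proj1 Hs) as Rinf.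
  assert (n_pos : (1 <= n)%nat) by (simpl in Hlen; lia).
  destruct (dotA_bound R Rinf Bs) as [W [k [HW HBs]]].
  destruct (perturbed_pos R Hs F Fpos W k HW) as [J1 Hpos].
  destruct (perturbed_increasing R Hs F Fpos W k HW) as [J2 Hinc].
  destruct (perturbed_doubling R Hs F Fpos W k HW) as [J3 [L Hdbl]].
  exists (J1 + J2 + J3)%nat, L. intros Delta HDelta.
  assert (Hsplit : forall z, inRtildeDelta R N d n Delta z -> exists z1 zs v,
    z = z1 :: zs /\ R z1 = true /\ R v = true /\ (v <= z1)%nat /\
    (forall J, (J <= J1 + J2 + J3)%nat -> (succRk R J v <= z1)%nat) /\
    Z.abs (dotA R Bs zs) <= W * Z.of_nat (succRk R k v)).
  { intros z Hz.
    destruct (inRtildeDelta_decomp R N d n Delta Rinf n_pos z Hz)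
      as [z1 [zs [v [-> [Hz1 [Rv [Hv Hzs]]]]]]].
    assert (HJ : forall J, (J <= J1 + J2 + J3)%nat -> (succRk R J v <= z1)%nat).
    { intros J HJ. pose proof (succRk_mono_k R Rinf J Delta v ltac:(lia)). lia. }
    exists z1, zs, v. split; [reflexivity|]. split; [exact (Rsub_R R Rinf N d z1 Hz1)|].
    split; [exact Rv|]. split; [pose proof (HJ 0%nat ltac:(lia)); simpl in *; lia|].
    split; [exact HJ|exact (HBs zs v Hzs)]. }
  split; [|split].
  - intros z Hz. destruct (Hsplit z Hz) as [z1 [zs [v [-> [Rz1 [Rv [_ [HJ HT]]]]]]]].
    exact (Hpos z1 v _ Rz1 Rv (HJ J1 ltac:(lia)) HT).
  - intros z z' Hz Hz' Hlt.
    destruct (Hsplit z Hz) as [z1 [zs [v [-> [Rz1 [Rv [_ [HJ HT]]]]]]]].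
    destruct (Hsplit z' Hz') as [z1' [zs' [v' [-> [Rz1' [Rv' [_ [HJ' HT']]]]]]]].
    exact (Hinc z1 v _ z1' v' _ Rz1 Rv (HJ J2 ltac:(lia)) HT Rz1' Rv' (HJ' J2 ltac:(lia)) HT' Hlt).
  - intros z z' Hz Hz' HL.
    destruct (Hsplit z Hz) as [z1 [zs [v [-> [Rz1 [Rv [Hvz1 [HJ HT]]]]]]]].
    destruct (Hsplit z' Hz') as [z1' [zs' [v' [-> [Rz1' [Rv' [_ [HJ' HT']]]]]]]].
    exact (Hdbl z1 v _ z1' v' _ Rz1 Hvz1 HT Rz1' Rv' (HJ' J3 ltac:(lia)) HT' HL).
Qed.

Definition succ_close (R : nat -> bool) (Lambda a b : nat) : Prop :=
  exists delta : nat, (delta <= Lambda)%nat /\ a = succRk R delta b.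

Section LeadOrder.

Variables (R : nat -> bool) (N d n Delta L : nat) (f : list nat -> Z).
Hypothesis f_geom : lead_geometric R N d n Delta L f.

Local Notation dom := (inRtildeDelta R N d n Delta).
Local Notation lead z := (nth 0 z 0%nat).

Lemma lead_le_of_le z z' : dom z -> dom z' -> f z <= f z' -> (lead z <= lead z')%nat.
Proof.
  intros Hz Hz' Hle. destruct (le_lt_dec (lead z) (lead z')) as [|Hlt]; auto.
  pose proof (proj1 (proj2 f_geom) z' z Hz' Hz Hlt). lia.
Qed.

Lemma lead_above_greatest_below a p : dom p ->
  (forall w, dom w -> f w < a -> f w <= f p) ->
  forall z, dom z -> (lead p < lead z)%nat -> a <= f z.
Proof.
  intros Hp Hmax z Hz Hlt. destruct (Z_le_gt_dec a (f z)) as [|Hgt]; auto.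
  pose proof (lead_le_of_le z p Hz Hp (Hmax z Hz ltac:(lia))). lia.
Qed.

Lemma lead_floor_key a b pa pb pc : dom pa -> f pa < a + b ->
  (forall z, dom z -> (lead pb < lead z)%nat -> a <= f z) ->
  (forall z, dom z -> (lead pc < lead z)%nat -> b <= f z) ->
  forall q, dom q -> (lead pb < lead q)%nat -> (lead pc < lead q)%nat ->
    (lead pa <= succRk R L (lead q))%nat.
Proof.
  intros Ha Hpa Hpb Hpc q Hq Hbq Hcq.
  destruct (le_lt_dec (lead pa) (succRk R L (lead q))) as [|Hlt]; auto.
  pose proof (proj2 (proj2 f_geom) q pa Hq Ha ltac:(lia)).
  specialize (Hpb q Hq Hbq). specialize (Hpc q Hq Hcq). lia.
Qed.

End LeadOrder.

Section LeadRaise.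

Variables (R : nat -> bool) (N d n Delta : nat).
Hypothesis Rinf : Rinfinite R.
Hypothesis n_pos : (1 <= n)%nat.
Hypothesis d_pos : (1 <= d)%nat.

Local Notation dom := (inRtildeDelta R N d n Delta).
Local Notation lead z := (nth 0 z 0%nat).

(* Raising the larger of the two leads by [σ^d] gives a point above both. *)
Lemma lead_close Lambda pa pb pc : dom pa -> dom pb -> dom pc ->
  (lead pb <= lead pa)%nat -> (lead pc <= lead pa)%nat ->
  (forall q, dom q -> (lead pb < lead q)%nat -> (lead pc < lead q)%nat ->
     (lead pa <= succRk R Lambda (lead q))%nat) ->
  succ_close R (Lambda + d) (lead pa) (lead pb) \/ succ_close R (Lambda + d) (lead pa) (lead pc).
Proof.
  intros Ha Hb Hc Hba Hca Hkey.
  assert (Hraise : forall p, dom p -> (lead pb <= lead p)%nat -> (lead pc <= lead p)%nat ->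
    (lead p <= lead pa)%nat -> succ_close R (Lambda + d) (lead pa) (lead p)).
  { intros p Hp Hbp Hcp Hpa.
    destruct (inRtildeDelta_raise_head R N d n Delta Rinf n_pos p 1 Hp) as [q [Hq Hlead]].
    rewrite Nat.mul_1_r in Hlead.
    pose proof (succRk_lt_k R Rinf 0 d (lead p) d_pos) as Hlt. simpl in Hlt.
    specialize (Hkey q Hq ltac:(lia) ltac:(lia)). rewrite Hlead, <- succRk_add in Hkey.
    apply (succRk_reach_within R Rinf); [| |exact Hpa|exact Hkey].
    - exact (inRtildeDelta_head_R R N d n Delta Rinf n_pos p Hp).
    - exact (inRtildeDelta_head_R R N d n Delta Rinf n_pos pa Ha). }
  destruct (le_lt_dec (lead pb) (lead pc)) as [Hbc|Hcb].
  - right. apply Hraise; auto.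
  - left. apply Hraise; auto; lia.
Qed.

Variables (L : nat) (f : list nat -> Z).
Hypothesis f_geom : lead_geometric R N d n Delta L f.

Lemma lead_geometric_unbounded : (exists z0, dom z0) -> forall c, exists z, dom z /\ c < f z.
Proof.
  destruct f_geom as [Hpos [_ Hdbl]]. intros [z0 Hz0] c.
  assert (Hnat : forall j : nat, exists z, dom z /\ Z.of_nat j < f z).
  { induction j as [|j [z [Hz Hj]]]; [exists z0; split; auto; specialize (Hpos z0 Hz0); lia|].
    destruct (inRtildeDelta_raise_head R N d n Delta Rinf n_pos z L Hz) as [z' [Hz' Hlead]].
    exists z'. split; auto.
    assert (2 * f z <= f z').
    { apply Hdbl; auto. rewrite Hlead. apply (succRk_mono_k R Rinf). nia. }
    lia. }
  destruct (Hnat (Z.to_nat c)) as [z [Hz Hc]]. exists z. split; auto. lia.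
Qed.

Lemma lead_ceiling_key a b pa pb pc :
  (forall w, dom w -> a + b < f w -> f pa <= f w) ->
  (forall z, dom z -> (lead pb < lead z)%nat -> a < f z) ->
  (forall z, dom z -> (lead pc < lead z)%nat -> b < f z) ->
  dom pa ->
  forall q, dom q -> (lead pb < lead q)%nat -> (lead pc < lead q)%nat ->
    (lead pa <= succRk R (d * L) (lead q))%nat.
Proof.
  intros Hpa Hpb Hpc Ha q Hq Hbq Hcq.
  destruct (inRtildeDelta_raise_head R N d n Delta Rinf n_pos q L Hq) as [z [Hz Hlead]].
  rewrite <- Hlead. apply (lead_le_of_le R N d n Delta L f f_geom); auto. apply Hpa; auto.
  assert (2 * f q <= f z).
  { apply (proj2 (proj2 f_geom)); auto. rewrite Hlead. apply (succRk_mono_k R Rinf). nia. }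
  specialize (Hpb q Hq Hbq). specialize (Hpc q Hq Hcq). lia.
Qed.

End LeadRaise.

Lemma greatest_below_exists {T : Type} (Q : T -> Prop) (f : T -> Z) (u : Z) :
  (exists w, Q w /\ f w < u) ->
  exists z, Q z /\ f z < u /\ forall w, Q w -> f w < u -> f w <= f z.
Proof.
  intros [w0 [Qw0 Hw0]]. apply NNPP. intros Hnone.
  (* Without a maximum, values below [u] would come arbitrarily close to [u]. *)
  assert (Hgap : forall (j : nat) z, Q z -> f z < u ->
                   (Z.to_nat (u - f z) <= j)%nat -> False).
  { induction j as [|j IH]; intros z Qz Hz Hj; [lia|].
    apply Hnone. exists z. split; [exact Qz|split; [exact Hz|]]. intros w Qw Hw.
    destruct (Z_le_gt_dec (f w) (f z)) as [|Hgt]; auto.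
    exfalso. apply (IH w Qw Hw). lia. }
  exact (Hgap _ w0 Qw0 Hw0 (le_n _)).
Qed.

Section PSpec.

Variables (R : nat -> bool) (N d n Delta : nat) (A : list operator) (u : Z).

Local Notation dom := (inRtildeDelta R N d n Delta).
Local Notation P := (PDelta R N d n Delta A u).

Lemma PDelta_greatest_below : (exists w, dom w /\ dotA R A w < u) ->
  dom P /\ dotA R A P < u /\ forall w, dom w -> dotA R A w < u -> dotA R A w <= dotA R A P.
Proof.
  intros Hex.
  assert (HP : isP R N d n Delta A u P).
  { unfold PDelta. apply epsilon_spec.
    destruct (greatest_below_exists dom (dotA R A) u Hex) as [z Hz]. exists z. split; tauto. }
  destruct HP as [Hd [[_ H] | [Hnone _]]]; [tauto|contradiction].
Qed.

Lemma PDelta_min m : ~ (exists w, dom w /\ dotA R A w < u) -> isMinDot R N d n Delta A m ->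
  dom P /\ forall w, dom w -> dotA R A P <= dotA R A w.
Proof.
  intros Hnone [[z0 [Hz0 <-]] Hmin].
  assert (HP : isP R N d n Delta A u P).
  { unfold PDelta. apply epsilon_spec. exists z0. split; [exact Hz0|]. right. split; auto. }
  destruct HP as [Hd [[Hex _] | [_ H]]]; [contradiction|auto].
Qed.

End PSpec.

Lemma P1Delta_close_pos R N d n F Bs : sparse R -> opPos R F -> (1 <= d)%nat ->
  length (F :: Bs) = n ->
  exists Delta0, forall Delta, (Delta0 <= Delta)%nat -> exists Lambda, forall s t x m,
    isMinDot R N d n Delta (F :: Bs) m -> s <= t -> t < x - m ->
    succ_close R Lambda (P1Delta R N d n Delta (F :: Bs) (x - s))
                        (P1Delta R N d n Delta (F :: Bs) (x - t)) \/
    succ_close R Lambda (P1Delta R N d n Delta (F :: Bs) (x - s))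
                        (P1Delta R N d n Delta (F :: Bs) (t - s)).
Proof.
  intros Hs Fpos d_pos Hlen. pose proof (proj1 Hs) as Rinf.
  assert (n_pos : (1 <= n)%nat) by (simpl in Hlen; lia).
  destruct (dotA_lead_geometric R N d n F Bs Hs Fpos Hlen) as [Delta0 [L HL]].
  exists Delta0. intros Delta HDelta. specialize (HL Delta HDelta). exists (L + d)%nat.
  intros s t x m Hm Hst Htx. set (A := F :: Bs) in *. unfold P1Delta.
  pose proof Hm as [[z0 [Hz0 Hfz0]] _]. pose proof (proj1 HL z0 Hz0) as Hm_pos.
  set (pa := PDelta R N d n Delta A (x - s)). set (pb := PDelta R N d n Delta A (x - t)).
  set (pc := PDelta R N d n Delta A (t - s)).
  destruct (PDelta_greatest_below R N d n Delta A (x - s)) as [Ha [Hfa Hmaxa]];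
    [exists z0; split; [exact Hz0|lia]|]. fold pa in Ha, Hfa, Hmaxa.
  destruct (PDelta_greatest_below R N d n Delta A (x - t)) as [Hb [Hfb Hmaxb]];
    [exists z0; split; [exact Hz0|lia]|]. fold pb in Hb, Hfb, Hmaxb.
  assert (Hc : inRtildeDelta R N d n Delta pc /\ dotA R A pc <= dotA R A pa /\
    forall z, inRtildeDelta R N d n Delta z -> (nth 0 pc 0 < nth 0 z 0)%nat -> t - s <= dotA R A z).
  { destruct (classic (exists w, inRtildeDelta R N d n Delta w /\ dotA R A w < t - s))
      as [Hex|Hnone].
    - destruct (PDelta_greatest_below R N d n Delta A (t - s) Hex) as [Hc [Hfc Hmaxc]].
      fold pc in Hc, Hfc, Hmaxc.
      split; [exact Hc|split; [apply Hmaxa; auto; lia|]].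
      exact (lead_above_greatest_below R N d n Delta L (dotA R A) HL (t - s) pc Hc Hmaxc).
    - destruct (PDelta_min R N d n Delta A (t - s) m Hnone Hm) as [Hc Hminc]. fold pc in Hc, Hminc.
      split; [exact Hc|split; [exact (Hminc pa Ha)|]].
      intros z Hz _. destruct (Z_le_gt_dec (t - s) (dotA R A z)) as [|Hgt]; auto.
      exfalso. apply Hnone. exists z. split; [exact Hz|lia]. }
  destruct Hc as [Hc [Hca Hpc]].
  apply (lead_close R N d n Delta Rinf n_pos d_pos); auto.
  - apply (lead_le_of_le R N d n Delta L (dotA R A) HL); auto. apply Hmaxa; auto. lia.
  - apply (lead_le_of_le R N d n Delta L (dotA R A) HL); auto.
  - apply (lead_floor_key R N d n Delta L (dotA R A) HL (x - t) (t - s)); auto; [lia|].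
    exact (lead_above_greatest_below R N d n Delta L (dotA R A) HL (x - t) pb Hb Hmaxb).
Qed.

Lemma P1Delta_close_neg R N d n F Bs : sparse R -> opNeg R F -> (1 <= d)%nat ->
  length (F :: Bs) = n ->
  exists Delta0, forall Delta, (Delta0 <= Delta)%nat -> exists Lambda, forall s t x M,
    isMaxDot R N d n Delta (F :: Bs) M -> s >= t -> t > x - M ->
    succ_close R Lambda (P1Delta R N d n Delta (F :: Bs) (x - s))
                        (P1Delta R N d n Delta (F :: Bs) (x - t)) \/
    succ_close R Lambda (P1Delta R N d n Delta (F :: Bs) (x - s))
                        (P1Delta R N d n Delta (F :: Bs) (t - s)).
Proof.
  intros Hs Fneg d_pos Hlen. pose proof (proj1 Hs) as Rinf.
  assert (n_pos : (1 <= n)%nat) by (simpl in Hlen; lia).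
  set (A := F :: Bs) in *.
  (* The positive-case analysis applies to [g = - A·z]. *)
  set (g := dotA R (map Z.opp F :: map (map Z.opp) Bs)).
  assert (Hg : forall z, g z = - dotA R A z) by exact (dotA_opp R A).
  destruct (dotA_lead_geometric R N d n (map Z.opp F) (map (map Z.opp) Bs) Hs
              (opNeg_opp R F Fneg) ltac:(rewrite <- Hlen; simpl; now rewrite length_map))
    as [Delta0 [L HL]].
  exists Delta0. intros Delta HDelta. specialize (HL Delta HDelta).
  change (lead_geometric R N d n Delta L g) in HL.
  exists (d * L + d)%nat. intros s t x M HM Hst Htx. unfold P1Delta.
  destruct HM as [[z0 [Hz0 HM0]] _].
  assert (HM_neg : M < 0) by (pose proof (proj1 HL z0 Hz0); rewrite Hg in *; lia).
  assert (Pleast : forall u, let p := PDelta R N d n Delta A u in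
    inRtildeDelta R N d n Delta p /\ - u < g p /\
    forall w, inRtildeDelta R N d n Delta w -> - u < g w -> g p <= g w).
  { intros u p. destruct (PDelta_greatest_below R N d n Delta A u) as [Hp [Hfp Hmax]];
      [|fold p in Hp, Hfp, Hmax].
    - destruct (lead_geometric_unbounded R N d n Delta Rinf n_pos d_pos L g HL
                  (ex_intro _ z0 Hz0) (- u)) as [z [Hz Hlt]].
      exists z. split; [exact Hz|]. rewrite Hg in Hlt. lia.
    - split; [exact Hp|]. rewrite Hg. split; [lia|].
      intros w Hw Hlt. rewrite Hg in *. specialize (Hmax w Hw ltac:(lia)). lia. }
  destruct (Pleast (x - s)) as [Ha [Hga Hmina]].
  destruct (Pleast (x - t)) as [Hb [Hgb Hminb]].
  destruct (Pleast (t - s)) as [Hc [Hgc Hminc]].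
  set (pa := PDelta R N d n Delta A (x - s)) in *.
  set (pb := PDelta R N d n Delta A (x - t)) in *.
  set (pc := PDelta R N d n Delta A (t - s)) in *.
  apply (lead_close R N d n Delta Rinf n_pos d_pos); auto.
  - apply (lead_le_of_le R N d n Delta L g HL); auto. apply Hminb; auto. lia.
  - apply (lead_le_of_le R N d n Delta L g HL); auto. apply Hminc; auto. lia.
  - apply (lead_ceiling_key R N d n Delta Rinf n_pos d_pos L g HL (t - x) (s - t)); auto.
    + intros w Hw Hlt. apply Hmina; auto. lia.
    + intros z Hz Hlt. pose proof (proj1 (proj2 HL) pb z Hb Hz Hlt). lia.
    + intros z Hz Hlt. pose proof (proj1 (proj2 HL) pc z Hc Hz Hlt). lia.
Qed.

Theorem mainTheorem15 :
  forall (R : nat -> bool) (d N n : nat) (A : list operator),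
    sparse R -> congruence_periodic R ->
    (1 <= d)%nat -> (1 <= n)%nat ->
    length A = n ->
    (forall i, (i < n)%nat -> ~ opEq0 R (nth i A [])) ->
    exists Delta0 : nat, forall Delta : nat, (Delta0 <= Delta)%nat ->
      Nat.divide d Delta ->
      exists Lambda : nat, forall s t x : Z,
        ( (opPos R (nth 0 A []) /\ s <= t /\
             exists m, isMinDot R N d n Delta A m /\ t < x - m)
        \/ (opNeg R (nth 0 A []) /\ s >= t /\
             exists M, isMaxDot R N d n Delta A M /\ t > x - M) ) ->
        (exists delta : nat, (delta <= Lambda)%nat /\
            P1Delta R N d n Delta A (x - s)
            = succRk R delta (P1Delta R N d n Delta A (x - t)))
        \/
        (exists eps : nat, (eps <= Lambda)%nat /\
            P1Delta R N d n Delta A (x - s)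
            = succRk R eps (P1Delta R N d n Delta A (t - s))).
Proof.
  intros R d N n A Hs _ d_pos n_pos Hlen Hnz.
  destruct A as [|F Bs]; [simpl in Hlen; lia|].
  pose proof (opPos_opNeg_exclusive R F (proj1 Hs)) as Hsign.
  destruct (proj2 Hs F) as [[Hzero | [Fpos | Fneg]] _].
  - exfalso. exact (Hnz 0%nat n_pos Hzero).
  - destruct (P1Delta_close_pos R N d n F Bs Hs Fpos d_pos Hlen) as [Delta0 Hclose].
    exists Delta0. intros Delta HDelta _. destruct (Hclose Delta HDelta) as [Lambda HLambda].
    exists Lambda. intros s t x [[_ [Hst [m [Hm Hx]]]] | [Fneg _]].
    + exact (HLambda s t x m Hm Hst Hx).
    + contradiction (Hsign Fpos Fneg).
  - destruct (P1Delta_close_neg R N d n F Bs Hs Fneg d_pos Hlen) as [Delta0 Hclose].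
    exists Delta0. intros Delta HDelta _. destruct (Hclose Delta HDelta) as [Lambda HLambda].
    exists Lambda. intros s t x [[Fpos _] | [_ [Hst [M [HM Hx]]]]].
    + contradiction (Hsign Fpos Fneg).
    + exact (HLambda s t x M HM Hst Hx).
Qed.
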